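(* Let $f$ be any periodic traveling wave (sub- or superluminal, librational or rotational). There exists $\mu_*<0$ such that $|\Delta_q|>2$ at $\mu=\mu_*$; consequently there exist two nonzero imaginary points $\lambda=\pm i\beta_*$, $\beta_*>0$, with $\mu_*=(i\gamma\beta_* )^2$, that are not in $\sigma(\mathrm{Q})$.
   Context: A traveling wave of speed $c$ ($c^2\neq1$) is a real solution $f$ of $(c^2-1)f''+\sin f=0$, with energy $E$ given by $\tfrac12(c^2-1)(f')^2+1-\cos f=E$; it is subluminal if $c^2<1$, superluminal if $c^2>1$; periodic traveling waves are librational ($0<E<2$) or rotational ($E<0$ if $c^2<1$, $E>2$ if $c^2>1$), with fundamental period $T$ (smallest $T>0$ with $f(z+T)=f(z)\pmod{2\pi}$). Let $\gamma=1/(c^2-1)$. Equation (Q): $q''+\gamma\cos(f(z))q=\mu q$, with $\mu=\gamma^2\lambda^2$. Writing (Q) as a first-order system for $(q,q')$ with fundamental matrix $F_q(z)$, $F_q(0)=I$, $\Delta_q$ denotes the trace of the monodromy matrix $F_q(T)$, viewed as a function of $\mu$. $\sigma(\mathrm{Q})$ is the set of $\lambda\in\mathbb{C}$ for which (Q) with $\mu=\gamma^2\lambda^2$ has a nontrivial solution bounded on $\mathbb{R}$. *)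

From Stdlib Require Import Reals ZArith.
From Coquelicot Require Import Coquelicot.
Open Scope R_scope.

Definition traveling_wave (c : R) (f : R -> R) : Prop :=
  c ^ 2 <> 1 /\
  (forall z, ex_derive f z) /\ (forall z, ex_derive (Derive f) z) /\
  (forall z, (c ^ 2 - 1) * Derive_n f 2 z + sin (f z) = 0).

Definition has_energy (c : R) (f : R -> R) (E : R) : Prop :=
  forall z, / 2 * (c ^ 2 - 1) * (Derive f z) ^ 2 + 1 - cos (f z) = E.

Definition is_period_mod2pi (f : R -> R) (T : R) : Prop :=
  0 < T /\ forall z, exists k : Z, f (z + T) = f z + 2 * PI * IZR k.

Definition fundamental_period (f : R -> R) (T : R) : Prop :=
  is_period_mod2pi f T /\ forall T', 0 < T' < T -> ~ is_period_mod2pi f T'.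

Definition librational (E : R) : Prop := 0 < E < 2.
Definition rotational (c E : R) : Prop :=
  (c ^ 2 < 1 /\ E < 0) \/ (c ^ 2 > 1 /\ E > 2).

Definition gam (c : R) : R := / (c ^ 2 - 1).

Definition solQ_R (c : R) (f : R -> R) (mu : R) (q p : R -> R) : Prop :=
  forall z, is_derive q z (p z) /\
            is_derive p z ((mu - gam c * cos (f z)) * q z).

(* d = Delta_q(mu) = trace of the monodromy matrix F_q(T) *)
Definition Delta_q (c : R) (f : R -> R) (T mu d : R) : Prop :=
  exists q1 p1 q2 p2 : R -> R,
    solQ_R c f mu q1 p1 /\ solQ_R c f mu q2 p2 /\
    q1 0 = 1 /\ p1 0 = 0 /\ q2 0 = 0 /\ p2 0 = 1 /\
    d = q1 T + p2 T.

Definition solQ_C (c : R) (f : R -> R) (mu : C) (q p : R -> C) : Prop :=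
  forall z, is_derive q z (p z) /\
            is_derive p z (Cmult (Cminus mu (RtoC (gam c * cos (f z)))) (q z)).

Definition in_sigmaQ (c : R) (f : R -> R) (lam : C) : Prop :=
  exists q p : R -> C,
    solQ_C c f (Cmult (RtoC (gam c ^ 2)) (Cmult lam lam)) q p /\
    (exists z, q z <> RtoC 0) /\
    (exists M, forall z, Cmod (q z) <= M).

From Stdlib Require Import Reals ZArith Lra Lia.
From Coquelicot Require Import Coquelicot.
Open Scope R_scope.

(* For a suitable mu < 0, equation (Q) has two explicit solutions of the form a(z) e^psi(z):
   with a = f' +- cc sin f in the librational case, and a = cos, sin of f/2 - pi/4 in the
   rotational case.  They are Floquet solutions with multipliers rho and 1/rho, and
   |rho| <> 1 because the increment of psi over a period is the integral of a function of
   constant sign.  Their Wronskian does not vanish, so Delta_q(mu) = rho + 1/rho has modulus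
   > 2, and every solution is the sum of an exponentially growing and an exponentially
   decaying one, so none is bounded; hence lambda = +-i beta with (gamma beta)^2 = -mu are
   not in sigma(Q). *)

Ltac solve_ex_derive :=
  repeat match goal with
  | |- True => exact I
  | |- _ /\ _ => split
  | H : forall z, is_derive ?g z _ |- ex_derive ?g _ => eexists; apply H
  | H : forall z, is_derive ?g z _ |- ex_derive (fun t => ?g t) _ => eexists; apply H
  end.

Ltac rewrite_Derive :=
  repeat match goal with
  | H : forall z, is_derive ?g z _ |- context [Derive ?g ?x] =>
      rewrite (is_derive_unique g x _ (H x))
  | H : forall z, is_derive ?g z _ |- context [Derive (fun t => ?g t) ?x] =>
      rewrite (is_derive_unique (fun t : R => g t) x _ (H x))
  end.

Lemma is_derive_fst (q : R -> C) z (l : C) :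
  is_derive q z l -> is_derive (fun t => fst (q t)) z (fst l).
Proof.
  intros H. eapply filterdiff_ext_lin.
  - apply (filterdiff_comp' q (fun t : C => fst t) z _ (fun t : C => fst t) H).
    apply filterdiff_linear, is_linear_fst.
  - reflexivity.
Qed.

Lemma is_derive_snd (q : R -> C) z (l : C) :
  is_derive q z l -> is_derive (fun t => snd (q t)) z (snd l).
Proof.
  intros H. eapply filterdiff_ext_lin.
  - apply (filterdiff_comp' q (fun t : C => snd t) z _ (fun t : C => snd t) H).
    apply filterdiff_linear, is_linear_snd.
  - reflexivity.
Qed.

Lemma continuity_of_is_derive (g dg : R -> R) :
  (forall x, is_derive g x (dg x)) -> continuity g.
Proof.
  intros H x. apply continuity_pt_filterlim.
  apply (ex_derive_continuous (K := R_AbsRing) (V := R_NormedModule)).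
  exists (dg x). apply H.
Qed.

Lemma MVT_is_derive (g dg : R -> R) a b : (forall x, is_derive g x (dg x)) ->
  exists c, Rmin a b <= c <= Rmax a b /\ g b - g a = dg c * (b - a).
Proof.
  intros H. apply MVT_gen; intros x _; [apply H | apply (continuity_of_is_derive g dg H)].
Qed.

Lemma is_derive_0_const (g : R -> R) :
  (forall x, is_derive g x 0) -> forall x y, g x = g y.
Proof.
  intros H x y. destruct (MVT_is_derive g (fun _ => 0) y x H) as [c [_ Hc]]. lra.
Qed.

Lemma is_derive_neq0_inj (g dg : R -> R) a b : (forall x, is_derive g x (dg x)) ->
  (forall x, dg x <> 0) -> a <> b -> g a <> g b.
Proof.
  intros H Hd Hab Hg. destruct (MVT_is_derive g dg a b H) as [c [_ Hc]].
  rewrite Hg, Rminus_diag in Hc. symmetry in Hc.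
  apply Rmult_integral in Hc as [Hc | Hc]; [exact (Hd c Hc) | lra].
Qed.

Lemma continuous_antiderivative (F : R -> R) : (forall z, continuous F z) ->
  exists Phi : R -> R, forall z, is_derive Phi z (F z).
Proof.
  intros HF. exists (fun z => RInt F 0 z). intros z.
  apply (is_derive_RInt F _ 0 z); [|apply HF].
  apply filter_forall. intros b. apply (RInt_correct (V := R_CompleteNormedModule)).
  apply (ex_RInt_continuous (V := R_CompleteNormedModule)). intros; apply HF.
Qed.

Lemma antiderivative_shift (Phi F : R -> R) T : (forall z, is_derive Phi z (F z)) ->
  (forall z, F (z + T) = F z) -> forall z, Phi (z + T) = Phi z + (Phi T - Phi 0).
Proof.
  intros H HF z.
  assert (D : forall x, is_derive (fun z => Phi (z + T) - Phi z) x 0).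
  { intros x. auto_derive; solve_ex_derive; rewrite_Derive. rewrite HF. ring. }
  pose proof (is_derive_0_const _ D z 0) as E. simpl in E. rewrite Rplus_0_l in E. lra.
Qed.

Lemma is_derive_neq0_sign (h dh : R -> R) : (forall z, is_derive h z (dh z)) ->
  (forall z, h z <> 0) -> forall z, 0 < h z * h 0.
Proof.
  intros Hd Hn z.
  destruct (Rlt_dec 0 (h z * h 0)) as [|Hneg]; auto. exfalso.
  destruct (IVT_gen h z 0 0) as [x [_ Hx]].
  - apply (continuity_of_is_derive h dh Hd).
  - pose proof (Hn z). pose proof (Hn 0).
    unfold Rmin, Rmax; destruct (Rle_dec (h z) (h 0)); split; nra.
  - exact (Hn x Hx).
Qed.

(* Between two distinct integers a continuous function takes a half-integer value. *)
Lemma is_derive_integer_valued_const (g dg : R -> R) :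
  (forall z, is_derive g z (dg z)) -> (forall z, exists k : Z, g z = IZR k) ->
  forall z, g z = g 0.
Proof.
  intros Hd Hk z.
  destruct (Hk z) as [k1 E1], (Hk 0) as [k0 E0].
  destruct (Z.eq_dec k1 k0) as [->|Hne]; [congruence|]. exfalso.
  set (v := IZR k0 + IZR (Z.sgn (k1 - k0)) / 2).
  destruct (IVT_gen g z 0 v) as [x [_ Hx]].
  - apply (continuity_of_is_derive g dg Hd).
  - unfold v. rewrite E1, E0. unfold Rmin, Rmax.
    destruct (Z_lt_le_dec k0 k1) as [Hl|Hl].
    + rewrite Z.sgn_pos by lia.
      assert (IZR k0 + 1 <= IZR k1) by (rewrite <- plus_IZR; apply IZR_le; lia).
      destruct (Rle_dec (IZR k1) (IZR k0)); lra.
    + rewrite Z.sgn_neg by lia.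
      assert (IZR k1 + 1 <= IZR k0) by (rewrite <- plus_IZR; apply IZR_le; lia).
      destruct (Rle_dec (IZR k1) (IZR k0)); lra.
  - destruct (Hk x) as [m Em]. rewrite Hx in Em. unfold v in Em.
    assert (Hodd : IZR (2 * m) = IZR (2 * k0 + Z.sgn (k1 - k0)))
      by (rewrite plus_IZR, !mult_IZR; lra).
    apply eq_IZR in Hodd.
    destruct (Z.sgn_spec (k1 - k0)) as [[_ Hs]|[[_ Hs]|[_ Hs]]]; rewrite Hs in Hodd; lia.
Qed.

Lemma sin_PI_IZR (k : Z) : sin (PI * IZR k) = 0.
Proof. apply sin_eq_0_1. exists k. ring. Qed.

Lemma sin_add_PI_IZR x (k : Z) : sin (x + PI * IZR k) = cos (PI * IZR k) * sin x.
Proof. rewrite sin_plus, sin_PI_IZR. ring. Qed.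

Lemma cos_add_PI_IZR x (k : Z) : cos (x + PI * IZR k) = cos (PI * IZR k) * cos x.
Proof. rewrite cos_plus, sin_PI_IZR. ring. Qed.

Lemma cos_PI_IZR_sqr (k : Z) : cos (PI * IZR k) ^ 2 = 1.
Proof.
  pose proof (sin2_cos2 (PI * IZR k)) as H. unfold Rsqr in H. rewrite sin_PI_IZR in H. lra.
Qed.

Lemma sin_2PI_IZR (k : Z) : sin (2 * PI * IZR k) = 0.
Proof. apply sin_eq_0_1. exists (2 * k)%Z. rewrite mult_IZR. ring. Qed.

Lemma cos_2PI_IZR (k : Z) : cos (2 * PI * IZR k) = 1.
Proof.
  replace (2 * PI * IZR k) with (2 * (PI * IZR k)) by ring.
  rewrite cos_2a_sin, sin_PI_IZR. ring.
Qed.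

(** * Floquet theory for (Q) *)

Lemma floquet_iter (q : R -> R) T r : (forall z, q (z + T) = r * q z) ->
  forall n z, q (z + INR n * T) = r ^ n * q z.
Proof.
  intros H n. induction n as [|n IH]; intros z.
  - simpl. rewrite Rmult_0_l, Rplus_0_r. ring.
  - rewrite S_INR. replace (z + (INR n + 1) * T) with ((z + INR n * T) + T) by ring.
    rewrite H, IH. simpl. ring.
Qed.

Lemma bounded_geometric_zero (K rho B : R) : Rabs rho > 1 ->
  (forall n : nat, Rabs (K * rho ^ n) <= B) -> K = 0.
Proof.
  intros Hr HB. destruct (Req_dec K 0) as [|HK]; auto. exfalso.
  assert (HKp : 0 < Rabs K) by (apply Rabs_pos_lt; auto).
  destruct (Pow_x_infinity rho Hr (B / Rabs K + 1)) as [N HN].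
  specialize (HN N (le_n N)). specialize (HB N). rewrite Rabs_mult in HB.
  assert (Rabs K * (B / Rabs K + 1) <= Rabs K * Rabs (rho ^ N))
    by (apply Rmult_le_compat_l; lra).
  replace (Rabs K * (B / Rabs K + 1)) with (B + Rabs K) in H by (field; lra).
  lra.
Qed.

Lemma floquet_sum_bounded_left (u v : R -> R) T rho rho' M :
  Rabs rho > 1 -> Rabs rho' <= 1 ->
  (forall z, u (z + T) = rho * u z) -> (forall z, v (z + T) = rho' * v z) ->
  (forall z, Rabs (u z + v z) <= M) -> forall z, u z = 0.
Proof.
  intros Hrho Hrho' Hu Hv HM z.
  apply (bounded_geometric_zero (u z) rho (M + Rabs (v z))); auto. intros n.
  replace (u z * rho ^ n) with ((u (z + INR n * T) + v (z + INR n * T)) - rho' ^ n * v z)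
    by (rewrite (floquet_iter u T rho), (floquet_iter v T rho') by auto; ring).
  eapply Rle_trans; [apply Rabs_triang|]. rewrite Rabs_Ropp, Rabs_mult.
  apply Rplus_le_compat; [apply HM|].
  assert (Rabs (rho' ^ n) <= 1).
  { rewrite <- RPow_abs, <- (pow1 n). apply pow_incr. split; [apply Rabs_pos | lra]. }
  pose proof (Rabs_pos (v z)). nra.
Qed.

(* Iterating backwards swaps the roles of the two multipliers. *)
Lemma floquet_sum_bounded_zero (u v : R -> R) T rho rho' M :
  Rabs rho > 1 -> rho * rho' = 1 ->
  (forall z, u (z + T) = rho * u z) -> (forall z, v (z + T) = rho' * v z) ->
  (forall z, Rabs (u z + v z) <= M) -> forall z, u z = 0 /\ v z = 0.
Proof.
  intros Hrho Hprod Hu Hv HM.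
  assert (Hrho' : Rabs rho' <= 1).
  { assert (Rabs rho * Rabs rho' = 1) by (rewrite <- Rabs_mult, Hprod; apply Rabs_R1).
    pose proof (Rabs_pos rho'). nra. }
  assert (Hu' : forall z, u (z + - T) = rho' * u z).
  { intros z. rewrite <- (Rplus_0_r z) at 2. rewrite <- (Rplus_opp_l T), <- Rplus_assoc, Hu.
    rewrite <- Rmult_assoc, (Rmult_comm rho'), Hprod. ring. }
  assert (Hv' : forall z, v (z + - T) = rho * v z).
  { intros z. rewrite <- (Rplus_0_r z) at 2. rewrite <- (Rplus_opp_l T), <- Rplus_assoc, Hv.
    rewrite <- Rmult_assoc, Hprod. ring. }
  intros z. split.
  - exact (floquet_sum_bounded_left u v T rho rho' M Hrho Hrho' Hu Hv HM z).
  - refine (floquet_sum_bounded_left v u (- T) rho rho' M Hrho Hrho' Hv' Hu' _ z).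
    intros x. rewrite Rplus_comm. apply HM.
Qed.

Lemma Rabs_gt1_of_mul1 (ra rb : R) : ra * rb = 1 -> Rabs ra <> 1 ->
  Rabs ra > 1 \/ Rabs rb > 1.
Proof.
  intros Hp Hra.
  assert (Rabs ra * Rabs rb = 1) by (rewrite <- Rabs_mult, Hp; apply Rabs_R1).
  pose proof (Rabs_pos ra). pose proof (Rabs_pos rb).
  destruct (Rlt_dec 1 (Rabs ra)); [left | right]; nra.
Qed.

Lemma Rabs_add_gt2_of_mul1 (ra rb : R) : ra * rb = 1 -> Rabs ra <> 1 ->
  Rabs (ra + rb) > 2.
Proof.
  intros Hp Hra.
  assert (ra <> rb).
  { intros <-. apply Hra.
    destruct (Rle_dec 0 ra); [rewrite Rabs_right | rewrite Rabs_left]; nra. }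
  assert (Hsq : (ra + rb) * (ra + rb) > 4).
  { assert (ra - rb <> 0) by lra. assert (0 < (ra - rb) * (ra - rb)) by nra. nra. }
  destruct (Rle_dec 0 (ra + rb)); [rewrite Rabs_right|rewrite Rabs_left]; nra.
Qed.

Section Floquet.
Variables (c : R) (f : R -> R) (mu T : R).

Definition floquet_solQ (q p : R -> R) (r : R) : Prop :=
  solQ_R c f mu q p /\ forall z, q (z + T) = r * q z /\ p (z + T) = r * p z.

Definition no_bounded_solQ_R : Prop :=
  forall q p, solQ_R c f mu q p -> (exists M, forall z, Rabs (q z) <= M) -> forall z, q z = 0.

Lemma solQ_R_wronskian_const q1 p1 q2 p2 :
  solQ_R c f mu q1 p1 -> solQ_R c f mu q2 p2 ->
  forall z, q1 z * p2 z - p1 z * q2 z = q1 0 * p2 0 - p1 0 * q2 0.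
Proof.
  intros H1 H2 z. apply (is_derive_0_const (fun z => q1 z * p2 z - p1 z * q2 z)). intros x.
  destruct (H1 x) as [A1 B1], (H2 x) as [A2 B2].
  set (V := mu - gam c * cos (f x)) in *.
  replace 0 with ((p1 x * p2 x + q1 x * (V * q2 x)) - (V * q1 x * q2 x + p1 x * p2 x)) by ring.
  apply (is_derive_minus (fun z => q1 z * p2 z) (fun z => p1 z * q2 z));
    apply Derive.is_derive_mult; assumption.
Qed.

Lemma solQ_R_lincomb q1 p1 q2 p2 a b :
  solQ_R c f mu q1 p1 -> solQ_R c f mu q2 p2 ->
  solQ_R c f mu (fun z => a * q1 z + b * q2 z) (fun z => a * p1 z + b * p2 z).
Proof.
  intros H1 H2 z. destruct (H1 z) as [A1 B1], (H2 z) as [A2 B2].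
  split; [|replace ((mu - gam c * cos (f z)) * (a * q1 z + b * q2 z)) with
             (a * ((mu - gam c * cos (f z)) * q1 z) + b * ((mu - gam c * cos (f z)) * q2 z))
             by ring];
  apply (is_derive_plus (fun z => a * _ z)); apply is_derive_scal; assumption.
Qed.

Section Pair.
Variables (qa pa qb pb : R -> R) (ra rb : R).
Hypotheses (Ha : floquet_solQ qa pa ra) (Hb : floquet_solQ qb pb rb)
  (HW : qa 0 * pb 0 - pa 0 * qb 0 <> 0).

Lemma floquet_multipliers_mul : ra * rb = 1.
Proof.
  pose proof (solQ_R_wronskian_const qa pa qb pb (proj1 Ha) (proj1 Hb) T) as E.
  destruct (proj2 Ha 0) as [E1 E2], (proj2 Hb 0) as [E3 E4].
  rewrite Rplus_0_l in E1, E2, E3, E4. rewrite E1, E2, E3, E4 in E.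
  apply (Rmult_eq_reg_r (qa 0 * pb 0 - pa 0 * qb 0)); [rewrite <- E at 2; ring | exact HW].
Qed.

(* The normalized fundamental solutions are combinations of the two Floquet solutions. *)
Lemma floquet_Delta_q : Delta_q c f T mu (ra + rb).
Proof.
  set (W0 := qa 0 * pb 0 - pa 0 * qb 0).
  exists (fun z => (pb 0 / W0) * qa z + (- pa 0 / W0) * qb z),
         (fun z => (pb 0 / W0) * pa z + (- pa 0 / W0) * pb z),
         (fun z => (- qb 0 / W0) * qa z + (qa 0 / W0) * qb z),
         (fun z => (- qb 0 / W0) * pa z + (qa 0 / W0) * pb z).
  destruct (proj2 Ha 0) as [E1 E2], (proj2 Hb 0) as [E3 E4].
  rewrite Rplus_0_l in E1, E2, E3, E4.
  split; [apply solQ_R_lincomb; [apply Ha | apply Hb]|].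
  split; [apply solQ_R_lincomb; [apply Ha | apply Hb]|].
  unfold W0 in *. rewrite E1, E2, E3, E4.
  do 4 (split; [field; exact HW|]). field; exact HW.
Qed.

Lemma floquet_no_bounded : Rabs ra <> 1 -> no_bounded_solQ_R.
Proof.
  intros Hra r r' Hr [M HM] z.
  set (W0 := qa 0 * pb 0 - pa 0 * qb 0).
  set (u := fun x => (r 0 * pb 0 - r' 0 * qb 0) * qa x).
  set (v := fun x => (qa 0 * r' 0 - pa 0 * r 0) * qb x).
  assert (Hrep : forall x, W0 * r x = u x + v x).
  { intros x. unfold u, v, W0.
    rewrite <- (solQ_R_wronskian_const r r' qb pb Hr (proj1 Hb) x).
    rewrite <- (solQ_R_wronskian_const qa pa r r' (proj1 Ha) Hr x).
    rewrite <- (solQ_R_wronskian_const qa pa qb pb (proj1 Ha) (proj1 Hb) x). ring. }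
  assert (Hu : forall x, u (x + T) = ra * u x) by (intros x; unfold u; rewrite (proj1 (proj2 Ha x)); ring).
  assert (Hv : forall x, v (x + T) = rb * v x) by (intros x; unfold v; rewrite (proj1 (proj2 Hb x)); ring).
  assert (Hbd : forall x, Rabs (u x + v x) <= Rabs W0 * M).
  { intros x. rewrite <- Hrep, Rabs_mult. apply Rmult_le_compat_l; [apply Rabs_pos | apply HM]. }
  pose proof floquet_multipliers_mul as Hp.
  assert (Huv : u z = 0 /\ v z = 0).
  { destruct (Rabs_gt1_of_mul1 ra rb Hp Hra) as [Hgt | Hgt].
    - exact (floquet_sum_bounded_zero u v T ra rb _ Hgt Hp Hu Hv Hbd z).
    - apply and_comm, (floquet_sum_bounded_zero v u T rb ra (Rabs W0 * M) Hgt);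
        [lra | assumption | assumption |].
      intros x. rewrite Rplus_comm. apply Hbd. }
  apply (Rmult_eq_reg_l W0); [rewrite Hrep; lra | exact HW].
Qed.

End Pair.

Lemma solQ_C_fst (q p : R -> C) : solQ_C c f (RtoC mu) q p ->
  solQ_R c f mu (fun z => fst (q z)) (fun z => fst (p z)).
Proof.
  intros Hs z. destruct (Hs z) as [Hq Hp]. split; [exact (is_derive_fst q z _ Hq)|].
  pose proof (is_derive_fst p z _ Hp) as H. simpl in H.
  replace ((mu - gam c * cos (f z)) * fst (q z)) with
    ((mu + - (gam c * cos (f z))) * fst (q z) - (0 + - 0) * snd (q z)) by ring.
  exact H.
Qed.

Lemma solQ_C_snd (q p : R -> C) : solQ_C c f (RtoC mu) q p ->
  solQ_R c f mu (fun z => snd (q z)) (fun z => snd (p z)).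
Proof.
  intros Hs z. destruct (Hs z) as [Hq Hp]. split; [exact (is_derive_snd q z _ Hq)|].
  pose proof (is_derive_snd p z _ Hp) as H. simpl in H.
  replace ((mu - gam c * cos (f z)) * snd (q z)) with
    ((mu + - (gam c * cos (f z))) * snd (q z) + (0 + - 0) * fst (q z)) by ring.
  exact H.
Qed.

Lemma not_in_sigmaQ_of_no_bounded (lam : C) : no_bounded_solQ_R ->
  Cmult (RtoC (gam c ^ 2)) (Cmult lam lam) = RtoC mu -> ~ in_sigmaQ c f lam.
Proof.
  intros Hz Heq [q [p [Hs [[z0 Hz0] [M HM]]]]].
  rewrite Heq in Hs. apply Hz0.
  assert (Hre : fst (q z0) = 0).
  { apply (Hz _ _ (solQ_C_fst q p Hs)). exists M. intros z.
    eapply Rle_trans; [apply Rmax_l | eapply Rle_trans; [apply Rmax_Cmod | apply HM]]. }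
  assert (Him : snd (q z0) = 0).
  { apply (Hz _ _ (solQ_C_snd q p Hs)). exists M. intros z.
    eapply Rle_trans; [apply Rmax_r | eapply Rle_trans; [apply Rmax_Cmod | apply HM]]. }
  destruct (q z0) as [x y]. simpl in Hre, Him. subst. reflexivity.
Qed.

End Floquet.

Definition imaginary_gap (c : R) (f : R -> R) (T : R) : Prop :=
  exists mu_s : R, mu_s < 0 /\
    (exists d : R, Delta_q c f T mu_s d /\ Rabs d > 2) /\
    (exists beta_s : R, 0 < beta_s /\
       RtoC mu_s = Cmult (Cmult Ci (RtoC (gam c * beta_s)))
                         (Cmult Ci (RtoC (gam c * beta_s))) /\
       ~ in_sigmaQ c f (Cmult Ci (RtoC beta_s)) /\
       ~ in_sigmaQ c f (Cmult Ci (RtoC (- beta_s)))).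

Lemma Cmult_Ci_RtoC_sqr (x : R) :
  Cmult (Cmult Ci (RtoC x)) (Cmult Ci (RtoC x)) = RtoC (- (x * x)).
Proof. unfold Cmult, Ci, RtoC; simpl. apply injective_projections; simpl; ring. Qed.

Lemma imaginary_gap_of_floquet_pair c f T mu qa pa qb pb ra rb :
  mu < 0 -> gam c <> 0 ->
  floquet_solQ c f mu T qa pa ra -> floquet_solQ c f mu T qb pb rb ->
  qa 0 * pb 0 - pa 0 * qb 0 <> 0 -> Rabs ra <> 1 -> imaginary_gap c f T.
Proof.
  intros Hmu Hg Ha Hb HW Hra.
  pose proof (floquet_multipliers_mul c f mu T qa pa qb pb ra rb Ha Hb HW) as Hp.
  set (beta := sqrt (- mu) / Rabs (gam c)).
  assert (Hag : 0 < Rabs (gam c)) by (apply Rabs_pos_lt; exact Hg).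
  assert (Hbeta : 0 < beta) by (apply Rdiv_lt_0_compat; [apply sqrt_lt_R0; lra | exact Hag]).
  assert (Hgb : gam c * beta * (gam c * beta) = - mu).
  { assert (Habs : Rabs (gam c) * Rabs (gam c) = gam c * gam c)
      by (rewrite <- Rabs_mult; apply Rabs_right; nra).
    unfold beta.
    replace (gam c * (sqrt (- mu) / Rabs (gam c)) * (gam c * (sqrt (- mu) / Rabs (gam c))))
      with (gam c * gam c / (Rabs (gam c) * Rabs (gam c)) * (sqrt (- mu) * sqrt (- mu)))
      by (field; lra).
    rewrite sqrt_sqrt, <- Habs by lra. field. lra. }
  assert (Hlam : forall lam, Cmult lam lam = RtoC (- (beta * beta)) -> ~ in_sigmaQ c f lam).
  { intros lam Hl. apply (not_in_sigmaQ_of_no_bounded c f mu).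
    - exact (floquet_no_bounded c f mu T qa pa qb pb ra rb Ha Hb HW Hra).
    - rewrite Hl. unfold Cmult, RtoC; simpl. apply injective_projections; simpl; nra. }
  exists mu. split; [exact Hmu|]. split.
  - exists (ra + rb). split.
    + exact (floquet_Delta_q c f mu T qa pa qb pb ra rb Ha Hb HW).
    + exact (Rabs_add_gt2_of_mul1 ra rb Hp Hra).
  - exists beta. split; [exact Hbeta|]. split; [|split; apply Hlam].
    + rewrite Cmult_Ci_RtoC_sqr, Hgb. f_equal. ring.
    + apply Cmult_Ci_RtoC_sqr.
    + rewrite Cmult_Ci_RtoC_sqr. f_equal. ring.
Qed.

(** * Solutions of product form *)

Lemma floquet_solQ_mul_exp c f mu T C (a a' b b' psi w : R -> R) :
  (forall z, is_derive a z (a' z)) -> (forall z, is_derive b z (b' z)) ->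
  (forall z, is_derive psi z (w z)) ->
  (forall z, a' z + a z * w z = b z) ->
  (forall z, b' z + b z * w z = (mu - gam c * cos (f z)) * a z) ->
  (forall z, w (z + T) = w z) ->
  (forall z, a (z + T) = C * a z) -> (forall z, b (z + T) = C * b z) ->
  floquet_solQ c f mu T (fun z => a z * exp (psi z)) (fun z => b z * exp (psi z))
    (C * exp (psi T - psi 0)).
Proof.
  intros Ha Hb Hpsi Hab Hba Hw HaT HbT. split.
  - intros z. split; [rewrite <- Hab | rewrite <- Rmult_assoc, <- Hba]; auto_derive;
      solve_ex_derive; rewrite_Derive; ring.
  - intros z. rewrite HaT, HbT, (antiderivative_shift psi w T Hpsi Hw z), exp_plus.
    split; ring.
Qed.

Lemma Rabs_mul_exp_neq1 (C d : R) : C ^ 2 = 1 -> d <> 0 -> Rabs (C * exp d) <> 1.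
Proof.
  intros HC Hd. rewrite Rabs_mult, (Rabs_right (exp d)) by (left; apply exp_pos).
  replace (Rabs C) with 1.
  - rewrite Rmult_1_l. intros E. apply Hd. rewrite <- (ln_exp d), E. apply ln_1.
  - destruct (Rle_dec 0 C); [rewrite Rabs_right | rewrite Rabs_left]; nra.
Qed.

Section Wave.
Variables (c : R) (f : R -> R).
Hypothesis Htw : traveling_wave c f.

Lemma gam_neq0 : gam c <> 0.
Proof. destruct Htw as [H _]. apply Rinv_neq_0_compat. lra. Qed.

Lemma is_derive_wave : forall z, is_derive f z (Derive f z).
Proof. intros z. apply Derive_correct, Htw. Qed.

Lemma is_derive_Derive_wave : forall z, is_derive (Derive f) z (- gam c * sin (f z)).
Proof.
  intros z. destruct Htw as [Hc [_ [H2 H3]]].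
  replace (- gam c * sin (f z)) with (Derive (Derive f) z); [apply Derive_correct, H2|].
  specialize (H3 z). change (Derive_n f 2 z) with (Derive (Derive f) z) in H3.
  apply (Rmult_eq_reg_l (c ^ 2 - 1)); [|lra]. unfold gam.
  replace ((c ^ 2 - 1) * (- / (c ^ 2 - 1) * sin (f z))) with (- sin (f z)) by (field; lra).
  lra.
Qed.

Lemma wave_energy E : has_energy c f E ->
  forall z, Derive f z ^ 2 = 2 * gam c * (E - 1 + cos (f z)).
Proof.
  intros Hen z. rewrite <- (Hen z). destruct Htw as [Hc _]. unfold gam. field. lra.
Qed.

Lemma wave_winding T : is_period_mod2pi f T ->
  exists k : Z, forall z, f (z + T) = f z + 2 * PI * IZR k.
Proof.
  intros [_ Hk].
  pose proof PI_RGT_0 as Hpi. pose proof is_derive_wave as Hf.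
  set (g := fun z => (f (z + T) - f z) / (2 * PI)).
  assert (Hd : forall z, is_derive g z ((Derive f (z + T) - Derive f z) / (2 * PI))).
  { intros z. unfold g. auto_derive; solve_ex_derive; rewrite_Derive; field; lra. }
  assert (Hint : forall z, exists k : Z, g z = IZR k).
  { intros z. destruct (Hk z) as [k Ek]. exists k. unfold g. rewrite Ek. field. lra. }
  destruct (Hint 0) as [k0 E0]. exists k0. intros z.
  pose proof (is_derive_integer_valued_const g _ Hd Hint z) as Ez.
  rewrite E0 in Ez. unfold g in Ez.
  apply (Rmult_eq_compat_r (2 * PI)) in Ez. field_simplify in Ez; lra.
Qed.

Section Periodic.
Variable T : R.
Hypothesis Hper : is_period_mod2pi f T.

Lemma Derive_wave_periodic : forall z, Derive f (z + T) = Derive f z.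
Proof.
  destruct (wave_winding T Hper) as [k Hk]. pose proof is_derive_wave as Hf. intros z.
  assert (D1 : is_derive (fun x => f x + 2 * PI * IZR k) z (Derive f (z + T))).
  { apply (is_derive_ext (fun x => f (x + T))); [intros x; apply Hk|].
    auto_derive; solve_ex_derive; rewrite_Derive; ring. }
  assert (D2 : is_derive (fun x => f x + 2 * PI * IZR k) z (Derive f z)).
  { auto_derive; solve_ex_derive; rewrite_Derive; ring. }
  rewrite <- (is_derive_unique _ _ _ D1). exact (is_derive_unique _ _ _ D2).
Qed.

Lemma sin_wave_periodic : forall z, sin (f (z + T)) = sin (f z).
Proof.
  destruct (wave_winding T Hper) as [k Hk]. intros z.
  rewrite Hk, sin_plus, sin_2PI_IZR, cos_2PI_IZR. ring.
Qed.

Lemma cos_wave_periodic : forall z, cos (f (z + T)) = cos (f z).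
Proof.
  destruct (wave_winding T Hper) as [k Hk]. intros z.
  rewrite Hk, cos_plus, sin_2PI_IZR, cos_2PI_IZR. ring.
Qed.

End Periodic.
End Wave.

(* In the algebraic identities, [s], [u], [y] stand for [sin f], [cos f], [f'] at a point and
   [e] for [E - 1] ([K], [M] for [cos], [sin] of [f / 2 - PI / 4] in the rotational case);
   each is proved by writing the difference of its two sides, with denominators cleared, as
   a combination of the Pythagorean identity, the energy relation and the relation
   defining [cc] (resp. [kap]). *)

Definition lib_weight (e A u : R) : R := (e - A) * u + 1 - A * e.

Lemma lib_riccati_first (s u y g e A cc : R) :
  s ^ 2 + u ^ 2 = 1 -> y ^ 2 = 2 * g * (e + u) -> cc ^ 2 * (1 - A ^ 2) = 2 * g * (e - A) ->
  cc <> 0 -> lib_weight e A u <> 0 ->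
  (- g * s + cc * u * y) + (y + cc * s) * ((e - A) * y * (cc * s - y) / (2 * cc * lib_weight e A u))
  = - g * s + cc * y * (u - A) / 2.
Proof.
  intros Hsu Hy Hcc Hcc0 HD.
  apply (Rmult_eq_reg_r (2 * cc * lib_weight e A u));
    [|apply Rmult_integral_contrapositive; split; lra].
  apply Rminus_diag_uniq.
  transitivity (y * (cc ^ 2 * (e - A) * (s ^ 2 + u ^ 2 - 1) - (e - A) * (y ^ 2 - 2 * g * (e + u))
                     + (e + u) * (cc ^ 2 * (1 - A ^ 2) - 2 * g * (e - A))));
    [unfold lib_weight in *; field; auto | rewrite Hsu, Hy, Hcc; ring].
Qed.

Lemma lib_riccati_second (s u y g e A cc : R) :
  s ^ 2 + u ^ 2 = 1 -> y ^ 2 = 2 * g * (e + u) -> cc ^ 2 * (1 - A ^ 2) = 2 * g * (e - A) ->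
  cc <> 0 -> lib_weight e A u <> 0 ->
  (- g * u * y + cc * (- g * s * (u - A) - s * y ^ 2) / 2)
  + (- g * s + cc * y * (u - A) / 2) * ((e - A) * y * (cc * s - y) / (2 * cc * lib_weight e A u))
  = (g * (A - e) / 2 - g * u) * (y + cc * s).
Proof.
  intros Hsu Hy Hcc Hcc0 HD.
  apply (Rmult_eq_reg_r (2 * cc * lib_weight e A u));
    [|apply Rmult_integral_contrapositive; split; lra].
  apply Rminus_diag_uniq.
  transitivity (- cc * g * y * (e - A) * (s ^ 2 + u ^ 2 - 1)
    + (cc * y / 2 * (A - u) * (e - A) + cc ^ 2 * s / 2 * (A * e + A * u + A ^ 2 - e * u - 2)
       + g * s * (e - A)) * (y ^ 2 - 2 * g * (e + u))
    - g * s * (e + u) * (cc ^ 2 * (1 - A ^ 2) - 2 * g * (e - A)));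
    [unfold lib_weight in *; field; auto | rewrite Hsu, Hy, Hcc; ring].
Qed.

Lemma lib_wronskian (s u y g e A cc : R) :
  s ^ 2 + u ^ 2 = 1 -> y ^ 2 = 2 * g * (e + u) ->
  (y + cc * s) * (- g * s - cc * y * (u - A) / 2) - (- g * s + cc * y * (u - A) / 2) * (y - cc * s)
  = - 2 * cc * g * lib_weight e A u.
Proof.
  intros Hsu Hy. apply Rminus_diag_uniq.
  transitivity (- cc * (u - A) * (y ^ 2 - 2 * g * (e + u)) - 2 * cc * g * (s ^ 2 + u ^ 2 - 1));
    [unfold lib_weight; field | rewrite Hsu, Hy; ring].
Qed.

Lemma rot_riccati (K M y g e kap : R) :
  K ^ 2 + M ^ 2 = 1 -> y ^ 2 = 2 * g * (e - 2 * K * M) -> kap ^ 2 = g * e / 2 ->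
  kap + y / 2 <> 0 ->
  let w := - (g / 2) / (kap + y / 2) in
  (- K * y ^ 2 / 4 + M * g * (K ^ 2 - M ^ 2) / 2 - M * y * w / 2
   + K * (- (g ^ 2 * (K ^ 2 - M ^ 2)) / (4 * (kap + y / 2) ^ 2)))
  + (- M * y / 2 + K * w) * w
  = (- g * e / 2 + 2 * g * K * M) * K.
Proof.
  intros HKM Hy Hkap HD w. unfold w.
  apply (Rmult_eq_reg_r ((kap + y / 2) ^ 2)); [|apply pow_nonzero; exact HD].
  apply Rminus_diag_uniq.
  transitivity ((- K * g ^ 2 / 4 - M * g * (kap + y / 2) ^ 2 / 2) * (K ^ 2 + M ^ 2 - 1)
    + (- K * (kap + y / 2) ^ 2 / 4 + M * g / 8) * (y ^ 2 - 2 * g * (e - 2 * K * M))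
    - M * g / 2 * (kap ^ 2 - g * e / 2));
    [field; intros HH; apply HD; lra | rewrite HKM, Hy, Hkap; field].
Qed.

Lemma rot_wronskian (K M y g e kap : R) :
  K ^ 2 + M ^ 2 = 1 -> y ^ 2 = 2 * g * (e - 2 * K * M) -> kap ^ 2 = g * e / 2 ->
  kap + y / 2 <> 0 ->
  let w := - (g / 2) / (kap + y / 2) in
  K * (K * y / 2 - M * w) - (- M * y / 2 + K * w) * M = kap.
Proof.
  intros HKM Hy Hkap HD w. unfold w.
  apply (Rmult_eq_reg_r (kap + y / 2)); [|exact HD].
  apply Rminus_diag_uniq.
  transitivity (y / 2 * (kap + y / 2) * (K ^ 2 + M ^ 2 - 1)
                + (y ^ 2 - 2 * g * (e - 2 * K * M)) / 4 - (kap ^ 2 - g * e / 2));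
    [field; intros HH; apply HD; lra | rewrite HKM, Hy, Hkap; field].
Qed.

(** * Librational waves *)

Section Librational.
Variables (c : R) (f : R -> R) (E T : R).
Hypotheses (Htw : traveling_wave c f) (Hen : has_energy c f E) (Hper : is_period_mod2pi f T).

Lemma lib_weight_pos A : -1 < E - 1 < 1 -> 0 < gam c * (E - 1 - A) ->
  forall z, 0 < lib_weight (E - 1) A (cos (f z)).
Proof.
  intros He HgA z.
  pose proof (wave_energy c f Htw E Hen z) as Hy.
  assert (Hge : 0 <= gam c * (E - 1 + cos (f z))) by (pose proof (pow2_ge_0 (Derive f z)); lra).
  assert (0 <= (E - 1 - A) * (E - 1 + cos (f z))).
  { destruct (Rlt_le_dec 0 (gam c)).
    - assert (0 < E - 1 - A) by nra. assert (0 <= E - 1 + cos (f z)) by nra. nra.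
    - assert (E - 1 - A < 0) by nra. assert (E - 1 + cos (f z) <= 0) by nra. nra. }
  replace (lib_weight (E - 1) A (cos (f z)))
    with ((E - 1 - A) * (E - 1 + cos (f z)) + (1 - (E - 1)) * (1 + (E - 1)))
    by (unfold lib_weight; ring).
  nra.
Qed.

(* The [t]-term has zero mean over a period (it is [t (sin f f')']); it is added to make
   the integrand positive also where [f'] vanishes. *)
Lemma lib_integrand_pos A t : -1 < E - 1 < 1 -> -1 < A < 1 -> 0 < gam c * (E - 1 - A) ->
  t * gam c < 0 -> -1/8 <= t <= 1/8 ->
  forall z, 0 < Derive f z ^ 2 / lib_weight (E - 1) A (cos (f z))
                + t * (cos (f z) * Derive f z ^ 2 - gam c * sin (f z) ^ 2).
Proof.
  intros He HA HgA Ht Ht8 z.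
  pose proof (lib_weight_pos A He HgA z) as HD.
  pose proof (wave_energy c f Htw E Hen z) as Hy.
  pose proof (COS_bound (f z)) as Hu. pose proof (sin2_cos2 (f z)) as Hsu. unfold Rsqr in Hsu.
  set (D := lib_weight (E - 1) A (cos (f z))) in *.
  set (u := cos (f z)) in *. set (s := sin (f z)) in *. set (y := Derive f z) in *.
  assert (HD4 : D <= 4) by (unfold D, lib_weight; nra).
  assert (Q1 : y ^ 2 / 4 <= y ^ 2 / D).
  { apply Rmult_le_compat_l; [apply pow2_ge_0 | apply Rinv_le_contravar; lra]. }
  assert (Q2 : - (y ^ 2) / 8 <= t * u * y ^ 2).
  { assert (- / 8 <= t * u) by nra. pose proof (pow2_ge_0 y). nra. }
  replace (y ^ 2 / D + t * (u * y ^ 2 - gam c * s ^ 2))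
    with (y ^ 2 / D + t * u * y ^ 2 + (- (t * gam c)) * s ^ 2) by ring.
  destruct (Req_dec y 0) as [Hy0|Hy0].
  - assert (gam c <> 0) by (intro H0; rewrite H0 in HgA; lra).
    rewrite Hy0 in Hy, Q1, Q2 |- *.
    assert (u = - (E - 1)) by (apply (Rmult_eq_reg_l (gam c)); nra).
    assert (0 < - (t * gam c) * s ^ 2) by (apply Rmult_lt_0_compat; nra).
    lra.
  - assert (0 < y ^ 2) by (apply pow2_gt_0; exact Hy0).
    assert (0 <= - (t * gam c) * s ^ 2) by (apply Rmult_le_pos; [lra | apply pow2_ge_0]).
    lra.
Qed.

Section Solutions.
Variables (A t : R) (Phi : R -> R).
Hypothesis HD : forall z, 0 < lib_weight (E - 1) A (cos (f z)).
Hypothesis HPhi : forall z, is_derive Phi z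
  (Derive f z ^ 2 / lib_weight (E - 1) A (cos (f z))
   + t * (cos (f z) * Derive f z ^ 2 - gam c * sin (f z) ^ 2)).

Definition lib_rate (cc z : R) : R :=
  (E - 1 - A) * Derive f z * (cc * sin (f z) - Derive f z)
  / (2 * cc * lib_weight (E - 1) A (cos (f z))).

(* The [t]-terms cancel in the derivative, and [- ln D / 2] produces the [sin f f'] part
   of [lib_rate]; only [Phi] contributes to the increment over a period. *)
Definition lib_phase (cc z : R) : R :=
  - (E - 1 - A) / (2 * cc) * (Phi z - t * sin (f z) * Derive f z)
  - ln (lib_weight (E - 1) A (cos (f z))) / 2.

Definition lib_q (cc z : R) : R := (Derive f z + cc * sin (f z)) * exp (lib_phase cc z).

Definition lib_p (cc z : R) : R :=
  (- gam c * sin (f z) + cc * Derive f z * (cos (f z) - A) / 2) * exp (lib_phase cc z).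

Lemma is_derive_lib_phase cc : cc <> 0 -> forall z, is_derive (lib_phase cc) z (lib_rate cc z).
Proof.
  intros Hcc z. pose proof (is_derive_wave c f Htw) as Hf.
  pose proof (is_derive_Derive_wave c f Htw) as Hy. pose proof (HD z) as HDz.
  unfold lib_phase, lib_rate, lib_weight in *. auto_derive.
  - solve_ex_derive. lra.
  - rewrite_Derive. field. split; [lra | exact Hcc].
Qed.

Lemma lib_phase_shift cc :
  lib_phase cc T - lib_phase cc 0 = - (E - 1 - A) / (2 * cc) * (Phi T - Phi 0).
Proof.
  pose proof (sin_wave_periodic c f Htw T Hper 0) as Hs.
  pose proof (cos_wave_periodic c f Htw T Hper 0) as Hc.
  pose proof (Derive_wave_periodic c f Htw T Hper 0) as Hy.
  rewrite Rplus_0_l in Hs, Hc, Hy.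
  unfold lib_phase. rewrite Hs, Hc, Hy. ring.
Qed.

Lemma lib_floquet cc : cc <> 0 -> cc ^ 2 * (1 - A ^ 2) = 2 * gam c * (E - 1 - A) ->
  floquet_solQ c f (gam c * (A - (E - 1)) / 2) T (lib_q cc) (lib_p cc)
    (1 * exp (lib_phase cc T - lib_phase cc 0)).
Proof.
  intros Hcc Hrel.
  pose proof (is_derive_wave c f Htw) as Hf. pose proof (is_derive_Derive_wave c f Htw) as Hy.
  pose proof (sin_wave_periodic c f Htw T Hper) as HsT.
  pose proof (cos_wave_periodic c f Htw T Hper) as HcT.
  pose proof (Derive_wave_periodic c f Htw T Hper) as HyT.
  assert (Hsu : forall z, sin (f z) ^ 2 + cos (f z) ^ 2 = 1)
    by (intros z; rewrite <- !Rsqr_pow2; apply sin2_cos2).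
  pose proof (wave_energy c f Htw E Hen) as Henergy.
  assert (HD0 : forall z, lib_weight (E - 1) A (cos (f z)) <> 0)
    by (intros z; specialize (HD z); lra).
  apply (floquet_solQ_mul_exp c f _ T 1 _
           (fun z => - gam c * sin (f z) + cc * cos (f z) * Derive f z) _
           (fun z => - gam c * cos (f z) * Derive f z
                     + cc * (- gam c * sin (f z) * (cos (f z) - A) - sin (f z) * Derive f z ^ 2) / 2)
           _ (lib_rate cc)).
  - intros z. auto_derive; solve_ex_derive; rewrite_Derive; ring.
  - intros z. auto_derive; solve_ex_derive; rewrite_Derive; field.
  - apply is_derive_lib_phase, Hcc.
  - intros z. apply lib_riccati_first; auto.
  - intros z. apply lib_riccati_second; auto.
  - intros z. unfold lib_rate. rewrite HsT, HcT, HyT. reflexivity.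
  - intros z. rewrite HsT, HyT. ring.
  - intros z. rewrite HsT, HcT, HyT. ring.
Qed.

Lemma lib_wronskian_neq0 cc : cc <> 0 ->
  lib_q cc 0 * lib_p (- cc) 0 - lib_p cc 0 * lib_q (- cc) 0 <> 0.
Proof.
  intros Hcc. pose proof (gam_neq0 c f Htw) as Hg. pose proof (HD 0) as HD0.
  assert (Hsu : sin (f 0) ^ 2 + cos (f 0) ^ 2 = 1) by (rewrite <- !Rsqr_pow2; apply sin2_cos2).
  pose proof (lib_wronskian (sin (f 0)) (cos (f 0)) (Derive f 0) (gam c) (E - 1) A cc
                Hsu (wave_energy c f Htw E Hen 0)) as HW.
  pose proof (exp_pos (lib_phase cc 0)). pose proof (exp_pos (lib_phase (- cc) 0)).
  unfold lib_q, lib_p.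
  replace (_ - _) with (exp (lib_phase cc 0) * exp (lib_phase (- cc) 0)
                        * (- 2 * cc * gam c * lib_weight (E - 1) A (cos (f 0))))
    by (rewrite <- HW; field).
  repeat apply Rmult_integral_contrapositive_currified; first [exact Hg | exact Hcc | lra].
Qed.

End Solutions.

Lemma lib_parameters (g e : R) : g <> 0 -> -1 < e < 1 ->
  exists A t, -1 < A < 1 /\ 0 < g * (e - A) /\ t * g < 0 /\ -1/8 <= t <= 1/8.
Proof.
  intros Hg He. destruct (Rlt_le_dec 0 g).
  - exists ((e - 1) / 2), (- / 8). repeat split; nra.
  - assert (g < 0) by (destruct (Req_dec g 0); [contradiction | lra]).
    exists ((e + 1) / 2), (/ 8). repeat split; nra.
Qed.

Lemma librational_imaginary_gap : librational E -> imaginary_gap c f T.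
Proof.
  intros HE. unfold librational in HE.
  pose proof (gam_neq0 c f Htw) as Hg.
  pose proof (is_derive_wave c f Htw) as Hf. pose proof (is_derive_Derive_wave c f Htw) as Hy.
  assert (He : -1 < E - 1 < 1) by lra.
  destruct (lib_parameters (gam c) (E - 1) Hg He) as [A [t [HA [HgA [Htg Ht]]]]].
  set (cc := sqrt (2 * gam c * (E - 1 - A) / (1 - A ^ 2))).
  assert (Hcc : 0 < cc) by (apply sqrt_lt_R0, Rdiv_lt_0_compat; nra).
  assert (Hrel : cc ^ 2 * (1 - A ^ 2) = 2 * gam c * (E - 1 - A)).
  { unfold cc. rewrite <- Rsqr_pow2, Rsqr_sqrt by (apply Rlt_le, Rdiv_lt_0_compat; nra).
    field. nra. }
  pose proof (lib_weight_pos A He HgA) as HD.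
  set (F := fun z => Derive f z ^ 2 / lib_weight (E - 1) A (cos (f z))
                     + t * (cos (f z) * Derive f z ^ 2 - gam c * sin (f z) ^ 2)).
  assert (HFc : forall z, continuous F z).
  { intros z. apply (ex_derive_continuous (K := R_AbsRing) (V := R_NormedModule)).
    pose proof (HD z). unfold F, lib_weight in *. auto_derive; solve_ex_derive; lra. }
  destruct (continuous_antiderivative F HFc) as [Phi HPhi].
  assert (HT : Phi T - Phi 0 <> 0).
  { apply Rminus_eq_contra, (is_derive_neq0_inj Phi F); [exact HPhi | | apply Rgt_not_eq, Hper].
    intros z. apply Rgt_not_eq, (lib_integrand_pos A t); auto. }
  apply (imaginary_gap_of_floquet_pair c f T (gam c * (A - (E - 1)) / 2)
           _ _ _ _ _ _ ltac:(nra) Hg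
           (lib_floquet A t Phi HD HPhi cc ltac:(lra) Hrel)
           (lib_floquet A t Phi HD HPhi (- cc) ltac:(lra) ltac:(rewrite <- Hrel; ring))
           (lib_wronskian_neq0 A t Phi HD cc ltac:(lra))).
  apply Rabs_mul_exp_neq1; [ring|]. rewrite lib_phase_shift.
  apply Rmult_integral_contrapositive. split; [|exact HT].
  unfold Rdiv. apply Rmult_integral_contrapositive. split.
  - intros H0. apply Hg. nra.
  - apply Rinv_neq_0_compat. lra.
Qed.

End Librational.

(** * Rotational waves *)

Lemma cos_half_angle x : cos x = - 2 * cos (x / 2 - PI / 4) * sin (x / 2 - PI / 4).
Proof.
  replace x with (2 * (x / 2 - PI / 4) + PI / 2) at 1 by field.
  rewrite cos_plus, cos_PI2, sin_PI2, sin_2a. ring.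
Qed.

Lemma sin_half_angle x : sin x = cos (x / 2 - PI / 4) ^ 2 - sin (x / 2 - PI / 4) ^ 2.
Proof.
  replace x with (2 * (x / 2 - PI / 4) + PI / 2) at 1 by field.
  rewrite sin_plus, cos_PI2, sin_PI2, cos_2a. ring.
Qed.

Section Rotational.
Variables (c : R) (f : R -> R) (E T : R).
Hypotheses (Htw : traveling_wave c f) (Hen : has_energy c f E) (Hper : is_period_mod2pi f T).

Definition rot_angle (z : R) : R := f z / 2 - PI / 4.

Lemma is_derive_rot_angle : forall z, is_derive rot_angle z (Derive f z / 2).
Proof.
  pose proof (is_derive_wave c f Htw) as Hf. intros z. unfold rot_angle.
  auto_derive; solve_ex_derive; rewrite_Derive; field.
Qed.

Lemma rot_angle_pythagoras : forall z, cos (rot_angle z) ^ 2 + sin (rot_angle z) ^ 2 = 1.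
Proof. intros z. rewrite <- !Rsqr_pow2, Rplus_comm. apply sin2_cos2. Qed.

Lemma rot_angle_energy : forall z,
  Derive f z ^ 2 = 2 * gam c * (E - 1 - 2 * cos (rot_angle z) * sin (rot_angle z)).
Proof. intros z. rewrite (wave_energy c f Htw E Hen z), cos_half_angle. unfold rot_angle. ring. Qed.

Section Solutions.
Variables (k : Z) (kap : R) (h : R -> R).

Definition rot_rate (z : R) : R := - (gam c / 2) / (kap + Derive f z / 2).

Hypotheses (Hk : forall z, f (z + T) = f z + 2 * PI * IZR k)
  (Hkap : kap ^ 2 = gam c * (E - 1) / 2) (Hden : forall z, kap + Derive f z / 2 <> 0)
  (Hh : forall z, is_derive h z (rot_rate z)).

Definition rot_q1 (z : R) : R := cos (rot_angle z) * exp (h z).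
Definition rot_p1 (z : R) : R :=
  (- sin (rot_angle z) * Derive f z / 2 + cos (rot_angle z) * rot_rate z) * exp (h z).
Definition rot_q2 (z : R) : R := sin (rot_angle z) * exp (- h z).
Definition rot_p2 (z : R) : R :=
  (cos (rot_angle z) * Derive f z / 2 - sin (rot_angle z) * rot_rate z) * exp (- h z).

Lemma cos_rot_angle_shift : forall z,
  cos (rot_angle (z + T)) = cos (PI * IZR k) * cos (rot_angle z).
Proof.
  intros z. replace (rot_angle (z + T)) with (rot_angle z + PI * IZR k)
    by (unfold rot_angle; rewrite Hk; field).
  apply cos_add_PI_IZR.
Qed.

Lemma sin_rot_angle_shift : forall z,
  sin (rot_angle (z + T)) = cos (PI * IZR k) * sin (rot_angle z).
Proof.
  intros z. replace (rot_angle (z + T)) with (rot_angle z + PI * IZR k)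
    by (unfold rot_angle; rewrite Hk; field).
  apply sin_add_PI_IZR.
Qed.

Lemma rot_rate_periodic : forall z, rot_rate (z + T) = rot_rate z.
Proof. intros z. unfold rot_rate. rewrite (Derive_wave_periodic c f Htw T Hper). reflexivity. Qed.

Lemma is_derive_rot_rate : forall z,
  is_derive rot_rate z (- (gam c ^ 2 * sin (f z)) / (4 * (kap + Derive f z / 2) ^ 2)).
Proof.
  pose proof (is_derive_Derive_wave c f Htw) as Hy.
  intros z. unfold rot_rate. auto_derive.
  - solve_ex_derive. intros HH. apply (Hden z). lra.
  - rewrite_Derive. field. intros HH. apply (Hden z). lra.
Qed.

Lemma rot_floquet_cos : floquet_solQ c f (- gam c * (E - 1) / 2) T rot_q1 rot_p1
  (cos (PI * IZR k) * exp (h T - h 0)).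
Proof.
  pose proof (is_derive_wave c f Htw) as Hf. pose proof (is_derive_Derive_wave c f Htw) as Hy.
  pose proof is_derive_rot_angle as Hth. pose proof is_derive_rot_rate as Hrate.
  pose proof (Derive_wave_periodic c f Htw T Hper) as HyT.
  unfold rot_q1, rot_p1.
  apply (floquet_solQ_mul_exp c f _ T _ _
    (fun z => - sin (rot_angle z) * Derive f z / 2) _
    (fun z => - cos (rot_angle z) * Derive f z ^ 2 / 4
       + sin (rot_angle z) * gam c * (cos (rot_angle z) ^ 2 - sin (rot_angle z) ^ 2) / 2
       - sin (rot_angle z) * Derive f z * rot_rate z / 2
       + cos (rot_angle z) * (- (gam c ^ 2 * (cos (rot_angle z) ^ 2 - sin (rot_angle z) ^ 2))
                              / (4 * (kap + Derive f z / 2) ^ 2)))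
    _ rot_rate).
  - intros z. auto_derive; solve_ex_derive; rewrite_Derive; field.
  - intros z. auto_derive; solve_ex_derive; rewrite_Derive.
    rewrite (sin_half_angle (f z)). fold (rot_angle z). field. intros HH. apply (Hden z). lra.
  - exact Hh.
  - intros z. field.
  - intros z. pose proof (rot_riccati _ _ _ _ _ _ (rot_angle_pythagoras z) (rot_angle_energy z)
                            Hkap (Hden z)) as Hric.
    cbv zeta in Hric. cbv beta. unfold rot_rate. rewrite Hric, (cos_half_angle (f z)). fold (rot_angle z).
    field.
  - exact rot_rate_periodic.
  - intros z. rewrite cos_rot_angle_shift. ring.
  - intros z. rewrite cos_rot_angle_shift, sin_rot_angle_shift, HyT, rot_rate_periodic. field.
Qed.

(* Obtained from [rot_riccati] under the symmetry [(cos, sin, f', kap) -> (sin, cos, -f', -kap)]. *)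
Lemma rot_floquet_sin : floquet_solQ c f (- gam c * (E - 1) / 2) T rot_q2 rot_p2
  (cos (PI * IZR k) * exp (- h T - - h 0)).
Proof.
  pose proof (is_derive_wave c f Htw) as Hf. pose proof (is_derive_Derive_wave c f Htw) as Hy.
  pose proof is_derive_rot_angle as Hth. pose proof is_derive_rot_rate as Hrate.
  pose proof (Derive_wave_periodic c f Htw T Hper) as HyT.
  unfold rot_q2, rot_p2.
  apply (floquet_solQ_mul_exp c f _ T _ _
    (fun z => cos (rot_angle z) * Derive f z / 2) _
    (fun z => - sin (rot_angle z) * Derive f z ^ 2 / 4
       - cos (rot_angle z) * gam c * (cos (rot_angle z) ^ 2 - sin (rot_angle z) ^ 2) / 2
       - cos (rot_angle z) * Derive f z * rot_rate z / 2
       + sin (rot_angle z) * gam c ^ 2 * (cos (rot_angle z) ^ 2 - sin (rot_angle z) ^ 2)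
         / (4 * (kap + Derive f z / 2) ^ 2))
    (fun z => - h z) (fun z => - rot_rate z)).
  - intros z. auto_derive; solve_ex_derive; rewrite_Derive; field.
  - intros z. auto_derive; solve_ex_derive; rewrite_Derive.
    rewrite (sin_half_angle (f z)). fold (rot_angle z). field. intros HH. apply (Hden z). lra.
  - intros z. apply (is_derive_opp h z _ (Hh z)).
  - intros z. field.
  - intros z. cbv beta.
    assert (Hsu : sin (rot_angle z) ^ 2 + cos (rot_angle z) ^ 2 = 1)
      by (rewrite Rplus_comm; apply rot_angle_pythagoras).
    assert (Henergy : (- Derive f z) ^ 2
                      = 2 * gam c * (E - 1 - 2 * sin (rot_angle z) * cos (rot_angle z)))
      by (replace ((- Derive f z) ^ 2) with (Derive f z ^ 2) by ring;
          rewrite rot_angle_energy; ring).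
    assert (Hkap' : (- kap) ^ 2 = gam c * (E - 1) / 2) by (rewrite <- Hkap; ring).
    assert (Hden' : - kap + - Derive f z / 2 <> 0) by (intros HH; apply (Hden z); lra).
    pose proof (rot_riccati _ _ _ _ _ _ Hsu Henergy Hkap' Hden') as Hric. cbv zeta in Hric.
    rewrite (cos_half_angle (f z)). fold (rot_angle z). unfold rot_rate.
    match type of Hric with ?L = _ =>
      transitivity L; [field; repeat split; intros HH; apply (Hden z); lra
                      | rewrite Hric; field] end.
  - intros z. cbv beta. rewrite rot_rate_periodic. reflexivity.
  - intros z. rewrite sin_rot_angle_shift. ring.
  - intros z. rewrite cos_rot_angle_shift, sin_rot_angle_shift, HyT, rot_rate_periodic. field.
Qed.

Lemma rot_wronskian_at0 : rot_q1 0 * rot_p2 0 - rot_p1 0 * rot_q2 0 = kap.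
Proof.
  pose proof (rot_wronskian _ _ _ _ _ _ (rot_angle_pythagoras 0) (rot_angle_energy 0) Hkap
                (Hden 0)) as HW.
  cbv zeta in HW. rewrite <- HW. unfold rot_q1, rot_p1, rot_q2, rot_p2, rot_rate.
  replace (exp (- h 0)) with (/ exp (h 0)) by (rewrite exp_Ropp; reflexivity).
  pose proof (exp_pos (h 0)). field. split; [intros HH; apply (Hden 0); lra | lra].
Qed.

End Solutions.

Lemma rot_energy_pos : rotational c E -> 0 < gam c * (E - 1) /\ forall z, 0 < Derive f z ^ 2.
Proof.
  intros Hrot.
  assert (Hge : 0 < gam c * (E - 1) /\ forall u, -1 <= u <= 1 -> 0 < gam c * (E - 1 + u)).
  { unfold gam. destruct Hrot as [[Hc HE]|[Hc HE]].
    - assert (/ (c ^ 2 - 1) < 0) by (apply Rinv_lt_0_compat; lra).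
      split; [|intros u Hu]; nra.
    - assert (0 < / (c ^ 2 - 1)) by (apply Rinv_0_lt_compat; lra).
      split; [|intros u Hu]; nra. }
  split; [apply Hge|]. intros z.
  rewrite (wave_energy c f Htw E Hen z). pose proof (Hge_u := proj2 Hge (cos (f z)) (COS_bound (f z))).
  lra.
Qed.

Lemma rot_kappa : rotational c E ->
  exists kap, kap ^ 2 = gam c * (E - 1) / 2 /\ forall z, 0 < kap * Derive f z.
Proof.
  intros Hrot. destruct (rot_energy_pos Hrot) as [Hge Hy2].
  assert (Hyn : forall z, Derive f z <> 0)
    by (intros z HH; specialize (Hy2 z); rewrite HH in Hy2; lra).
  pose proof (is_derive_neq0_sign _ _ (is_derive_Derive_wave c f Htw) Hyn) as Hsg.
  assert (Hr : 0 < sqrt (gam c * (E - 1) / 2)) by (apply sqrt_lt_R0; lra).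
  assert (Hr2 : sqrt (gam c * (E - 1) / 2) ^ 2 = gam c * (E - 1) / 2)
    by (rewrite <- Rsqr_pow2; apply Rsqr_sqrt; lra).
  destruct (Rlt_dec 0 (Derive f 0)) as [Hpos|Hneg].
  - exists (sqrt (gam c * (E - 1) / 2)). split; [exact Hr2|].
    intros z. specialize (Hsg z). assert (0 < Derive f z) by nra. nra.
  - assert (Derive f 0 < 0) by (specialize (Hyn 0); lra).
    exists (- sqrt (gam c * (E - 1) / 2)). split; [rewrite <- Hr2 at 2; ring|].
    intros z. specialize (Hsg z). assert (Derive f z < 0) by nra. nra.
Qed.

Lemma rotational_imaginary_gap : rotational c E -> imaginary_gap c f T.
Proof.
  intros Hrot. pose proof (gam_neq0 c f Htw) as Hg.
  pose proof (is_derive_wave c f Htw) as Hf. pose proof (is_derive_Derive_wave c f Htw) as Hy.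
  destruct (rot_energy_pos Hrot) as [Hge _].
  destruct (rot_kappa Hrot) as [kap [Hkap Hkapy]].
  assert (Hden : forall z, kap + Derive f z / 2 <> 0).
  { intros z HH. specialize (Hkapy z).
    assert (kap * (kap + Derive f z / 2) = 0) by (rewrite HH; ring). nra. }
  assert (Hcont : forall z, continuous (rot_rate kap) z).
  { intros z. apply (ex_derive_continuous (K := R_AbsRing) (V := R_NormedModule)).
    unfold rot_rate. auto_derive. solve_ex_derive. intros HH. apply (Hden z). lra. }
  destruct (continuous_antiderivative _ Hcont) as [h Hh].
  destruct (wave_winding c f Htw T Hper) as [k Hk].
  assert (Hmu : - gam c * (E - 1) / 2 < 0) by nra.
  apply (imaginary_gap_of_floquet_pair c f T _ _ _ _ _ _ _ Hmu Hg
           (rot_floquet_cos k kap h Hk Hkap Hden Hh) (rot_floquet_sin k kap h Hk Hkap Hden Hh)).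
  - rewrite (rot_wronskian_at0 kap h Hkap Hden). intros ->. specialize (Hkapy 0). lra.
  - apply Rabs_mul_exp_neq1; [apply cos_PI_IZR_sqr|]. apply Rminus_eq_contra.
    apply (is_derive_neq0_inj h (rot_rate kap)); [exact Hh | | apply Rgt_not_eq, Hper].
    intros z. unfold rot_rate, Rdiv. apply Rmult_integral_contrapositive. split.
    + intros HH. apply Hg. lra.
    + apply Rinv_neq_0_compat, Hden.
Qed.

End Rotational.

Theorem corollary3p9 (c : R) (f : R -> R) (E T : R) :
  traveling_wave c f ->
  has_energy c f E ->
  (librational E \/ rotational c E) ->
  fundamental_period f T ->
  exists mu_s : R, mu_s < 0 /\
    (exists d : R, Delta_q c f T mu_s d /\ Rabs d > 2) /\
    (exists beta_s : R, 0 < beta_s /\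
       RtoC mu_s = Cmult (Cmult Ci (RtoC (gam c * beta_s)))
                         (Cmult Ci (RtoC (gam c * beta_s))) /\
       ~ in_sigmaQ c f (Cmult Ci (RtoC beta_s)) /\
       ~ in_sigmaQ c f (Cmult Ci (RtoC (- beta_s)))).
Proof.
  intros Htw Hen [Hlib | Hrot] [Hper _].
  - exact (librational_imaginary_gap c f E T Htw Hen Hper Hlib).
  - exact (rotational_imaginary_gap c f E T Htw Hen Hper Hrot).
Qed.
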